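(* Let $T$ be a tree on at least three vertices and let $S \subseteq V(T)$. Then $S$ is a minimal fort of $T$ if and only if both of the following hold: (I) $S$ contains at least one leaf of $T$; and (II) for every leaf $\ell \in S$, every edge $\{a,b\}$ of $T$ with $a$ closer to $\ell$ than $b$ (possibly $a=\ell$, and possibly $b$ is a leaf) satisfies: (i) if $a, b \notin S$, then $N(b) \cap S = \emptyset$; (ii) if $a \notin S$ and $b \in S$, then $|N(b) \cap S| \le 1$; (iii) if $a \in S$ and $b \notin S$, then $|(N(b)\cap S)\setminus\{a\}| = 1$; (iv) if $a, b \in S$, then $|(N(b)\cap S)\setminus\{a\}| = 0$.
   Context: $N(b)$ is the set of neighbors of $b$. Distances are graph distances in $T$. A fort of a graph $G$ is a nonempty set $F\subseteq V(G)$ such that every vertex outside $F$ is adjacent to either zero or at least two vertices of $F$; it is minimal if no proper subset is a fort. *)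

(* A simple graph is a symmetric irreflexive relation e on a finType V. *)
From mathcomp Require Import all_boot.
Set Implicit Arguments. Unset Strict Implicit. Unset Printing Implicit Defensive.

Section Graphs.
Variables (V : finType) (e : rel V).

Definition nbhd (v : V) : {set V} := [set x | e v x].

Definition leaf (v : V) : bool := #|nbhd v| == 1.

Definition connected_graph : Prop := forall x y : V, connect e x y.

Definition acyclic : Prop :=
  forall c : seq V, uniq c -> 3 <= size c -> ~~ cycle e c.

Definition is_tree : Prop := connected_graph /\ acyclic.

Definition walk_len (x y : V) (n : nat) : bool :=
  [exists p : n.-tuple V, path e x p && (last x p == y)].

(* graph distance: least n with a walk of length n (any shortest walk has
   length < #|V|); equals #|V| if y is unreachable from x. *)
Definition dist (x y : V) : nat := find (walk_len x y) (iota 0 #|V|).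

Definition fort (F : {set V}) : Prop :=
  F != set0 /\ forall v, v \notin F -> #|nbhd v :&: F| != 1.

Definition minimal_fort (F : {set V}) : Prop :=
  fort F /\ forall F' : {set V}, F' \proper F -> ~ fort F'.

End Graphs.

From mathcomp Require Import all_boot.
Set Implicit Arguments. Unset Strict Implicit. Unset Printing Implicit Defensive.

(* Removing a vertex a from a tree leaves one branch per neighbour b of a.
   Intersecting a minimal fort S with a branch, or with the union of the
   branches at a vertex of S, yields a smaller fort unless the boundary
   vertex sees the right number of vertices of S; this forces (i)-(iv) on
   every edge directed away from a vertex of S, and the root of a smallest
   branch meeting S is a leaf in S, which gives (I).  Conversely, when (i)-(iv) hold
   along the edges directed away from a leaf l of S, every vertex of S sees
   at most one other one, so S is a fort, and each vertex of S is tied to its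
   predecessor in S by an edge or by a vertex outside S with exactly two
   neighbours in S; a fort inside S is closed under both ties, so it contains
   l as soon as it is nonempty, and then all of S. *)

Lemma path_exit (T : finType) (r : rel T) (A : {set T}) x p :
  path r x p -> x \in A -> last x p \notin A ->
  exists q y, [/\ size q < size p, path r x q, last x q \in A, y \notin A
                & r (last x q) y].
Proof.
elim: p x => [|y p IH] x /=; first by move=> _ ->.
move=> /andP[rxy ryp] xA; have [yA lA|yA _] := boolP (y \in A).
  have [q [z [sz rq qA zA rz]]] := IH y ryp yA lA.
  by exists (y :: q), z; split => //=; rewrite rxy.
by exists [::], y.
Qed.

Section Graph.
Variables (V : finType) (e : rel V).
Hypotheses (e_sym : symmetric e) (e_irr : irreflexive e)
  (conn : connected_graph e) (acyc : acyclic e).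

Lemma edge_neq x y : e x y -> x != y.
Proof. by apply: contraTneq => ->; rewrite e_irr. Qed.

Lemma minimal_fort_subset S X : minimal_fort e S -> fort e (S :&: X) -> S \subset X.
Proof.
case=> _ minS fSX; apply/negPn/negP => SX; apply: (minS _ _ fSX).
rewrite properEneq subsetIl andbT.
by apply: contra SX => /eqP <-; apply: subsetIr.
Qed.

Lemma fort_subset_pendant (S F : {set V}) x y : fort e F -> F \subset S ->
  #|nbhd e y :&: S| <= 1 -> e x y -> x \in F -> y \in F.
Proof.
move=> fF FS y_le1 exy xF; apply: contraT => yF; case/negP: (fF.2 y yF).
rewrite eqn_leq (leq_trans _ y_le1) ?subset_leq_card ?setIS //.
by apply/card_gt0P; exists x; rewrite !inE e_sym exy.
Qed.

Lemma fort_subset_link (S F : {set V}) a x y : fort e F -> F \subset S ->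
  a \notin S -> nbhd e a :&: S = [set x; y] -> x \in F -> y \in F.
Proof.
move=> fF FS aS NaS xF; apply: contraT => yF.
have aF : a \notin F by apply: contra aS; apply: (subsetP FS).
case/negP: (fF.2 a aF); apply/cards1P; exists x.
rewrite -(setIidPr FS) setIA NaS; apply/setP => z; rewrite !inE.
by case: eqP => [-> //|_]; case: eqP => [->|]; rewrite ?(negbTE yF).
Qed.

Lemma walk_lenP x y n :
  reflect (exists p, [/\ size p = n, path e x p & last x p = y]) (walk_len e x y n).
Proof.
apply: (iffP existsP) => [[p /andP[pp /eqP <-]]|[p [<- pp <-]]].
  by exists (val p); rewrite size_tuple.
by exists (in_tuple p); rewrite pp eqxx.
Qed.

Lemma dist_le x y n : walk_len e x y n -> dist e x y <= n.
Proof.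
move=> w; rewrite leqNgt; apply/negP => lt.
have nV : n < #|V|.
  by apply: leq_trans lt _; rewrite -[X in _ <= X](size_iota 0) find_size.
by have := before_find 0 lt; rewrite nth_iota // add0n w.
Qed.

Lemma dist_walk x y : walk_len e x y (dist e x y).
Proof.
have /connectP [p pp ->] := conn x y; case: (shortenP pp) => q pq uq _.
have q_lt : size q < #|V|.
  by rewrite cardT; apply: (uniq_leq_size uq) => z _; rewrite mem_enum.
have hq : has (walk_len e x (last x q)) (iota 0 #|V|).
  by apply/hasP; exists (size q); [rewrite mem_iota | apply/walk_lenP; exists q].
have := nth_find 0 hq; rewrite nth_iota ?add0n //.
by rewrite has_find size_iota in hq.
Qed.

Lemma dist_parent l v : v != l -> exists2 a, e a v & dist e l a < dist e l v.
Proof.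
move=> vl; have /walk_lenP [p [sz pp lp]] := dist_walk l v.
case/lastP: p sz pp lp => [_ _ /= lv|q a]; first by rewrite lv eqxx in vl.
rewrite size_rcons rcons_path last_rcons => <- /andP[pq ea] <-.
exists (last l q) => //; apply: leq_ltn_trans (dist_le _) (ltnSn _).
by apply/walk_lenP; exists q.
Qed.

Definition avoid (a : V) : rel V := [rel u v | [&& e u v, u != a & v != a]].

Definition branch (a b : V) : {set V} := [set x | connect (avoid a) b x].

Lemma branch_root a b : b \in branch a b.
Proof. by rewrite inE connect0. Qed.

Section Branch.
Variables (a b : V).
Hypothesis eab : e a b.

Lemma branch_base : a \notin branch a b.
Proof.
rewrite inE; apply/connectP => -[p]; case/lastP: p => [_ /= ab|p y].
  by move: eab; rewrite ab e_irr.
by rewrite rcons_path last_rcons => /andP[_ /and3P[_ _ ya]] ay; rewrite ay eqxx in ya.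
Qed.

Lemma branch_step x y : x \in branch a b -> e x y -> y != a -> y \in branch a b.
Proof.
move=> xB exy ya; have xa : x != a by apply: contraTneq xB => ->; apply: branch_base.
move: xB; rewrite !inE => xB; apply: connect_trans xB (connect1 _).
by rewrite /avoid /= exy xa.
Qed.

(* A second neighbour of a in [branch a b] would close a cycle through a and b. *)
Lemma branch_base_nbhd x : x \in branch a b -> e x a -> x = b.
Proof.
rewrite inE => /connectP [p pp ->] exa; case: (shortenP pp) exa => {pp}.
case=> [//|c q] pq uq _ /= exa; exfalso.
have aq : a \notin c :: q.
  apply: contra branch_base => ac; rewrite inE.
  by apply: (path_connect pq); rewrite in_cons ac orbT.
have uniq_cycle : uniq [:: a, b, c & q].
  by rewrite cons_uniq in_cons negb_or (edge_neq eab) aq uq.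
case/negP: (acyc uniq_cycle isT).
rewrite /cycle rcons_path /= eab exa andbT.
by apply: sub_path pq => u v /and3P[].
Qed.

Lemma branch_exit x y :
  x \in branch a b -> y \notin branch a b -> e x y -> x = b /\ y = a.
Proof.
move=> xB yB exy; have ya : y = a.
  by apply/eqP; apply: contraNT yB; apply: branch_step xB exy.
by split=> //; apply: branch_base_nbhd => //; rewrite -ya.
Qed.

Lemma branch_nbhd x : x \in branch a b -> x != b -> nbhd e x \subset branch a b.
Proof.
move=> xB xb; apply/subsetP => y; rewrite inE => exy.
by apply: contraNT xb => yB; have [->] := branch_exit xB yB exy.
Qed.

Lemma nbhd_outside_branch x :
  x \notin branch a b -> x != a -> nbhd e x :&: branch a b = set0.
Proof.
move=> xB xa; apply/setP => y; rewrite in_set0 in_setI [y \in nbhd e x]inE.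
apply/andP => -[exy yB].
have eyx : e y x by rewrite e_sym.
by have [_ xa'] := branch_exit yB xB eyx; rewrite xa' eqxx in xa.
Qed.

Lemma nbhd_base_branch : nbhd e a :&: branch a b = [set b].
Proof.
apply/setP => y; rewrite in_setI in_set1 [y \in nbhd e a]inE.
apply/andP/eqP => [[eay yB]|->].
  by apply: branch_base_nbhd; rewrite // e_sym.
by rewrite eab branch_root.
Qed.

Lemma nbhd_root_branch : nbhd e b :&: branch a b = nbhd e b :\ a.
Proof.
apply/setP => y; rewrite in_setI in_setD1 [y \in nbhd e b]inE andbC.
apply: andb_id2r => eby; apply/idP/idP => [yB|ya].
  by apply: contraTneq yB => ->; apply: branch_base.
exact: branch_step (branch_root a b) eby ya.
Qed.

End Branch.

Lemma branch_subset a b c :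
  e a b -> e b c -> c != a -> branch b c \subset branch a b.
Proof.
move=> eab ebc ca; apply/subsetP => x; rewrite [x \in branch b c]inE.
move=> /connectP [p pp ->]; apply: contraT => pB.
have cB : c \in branch a b := branch_step eab (branch_root a b) ebc ca.
have [q [y [_ _ qB yB /and3P[eqy qb _]]]] := path_exit pp cB pB.
by have [qb'] := branch_exit eab qB yB eqy; rewrite qb' eqxx in qb.
Qed.

Lemma branch_split a b x : x \in branch a b ->
  x = b \/ exists2 c, e b c /\ c != a & x \in branch b c.
Proof.
rewrite inE => /connectP [p pp ->]; case: (shortenP pp) => {pp}.
case=> [|c q] pq uq _; [by left | right].
move: pq => /= /andP[/and3P[ebc _ ca] pq]; exists c => //.
have bq : b \notin c :: q by case/andP: uq.
rewrite inE; apply/connectP; exists q => //.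
apply: (@sub_in_path _ (predC1 b) (avoid a)) pq.
  by move=> u v; rewrite !inE => ub vb /and3P[euv _ _]; rewrite /avoid /= euv ub vb.
by apply/allP => z zq /=; apply: contraNneq bq => <-.
Qed.

Lemma branch_dist l a b : e a b -> l \in branch a b -> dist e l b < dist e l a.
Proof.
move=> eab lB; have /walk_lenP [p [sz pp lp]] := dist_walk l a.
have aB : last l p \notin branch a b by rewrite lp branch_base.
have [q [y [qp pq qB yB eqy]]] := path_exit pp lB aB.
have [qb _] := branch_exit eab qB yB eqy.
rewrite -sz; apply: leq_ltn_trans qp; apply: dist_le.
by apply/walk_lenP; exists q.
Qed.

Lemma fort_branch_leaf S a b : fort e S -> e a b -> S :&: branch a b != set0 ->
  exists2 l, l \in S & leaf e l.
Proof.
move=> [_ fS]; move def_n: #|branch a b| => n.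
elim/ltn_ind: n a b def_n => n IH a b def_n eab /set0Pn [s /setIP[sS sB]].
have [/existsP [c /and3P[ebc ca Sc]]|/existsPn noS] :=
  boolP [exists c, [&& e b c, c != a & S :&: branch b c != set0]].
  apply: (IH _ _ b c erefl ebc Sc); rewrite -def_n; apply: proper_card.
  rewrite properEneq branch_subset // andbT.
  by apply: contraTneq (branch_root a b) => <-; apply: branch_base.
have {}noS c : e b c -> c != a -> S :&: branch b c = set0.
  by move=> ebc ca; apply/eqP; move: (noS c); rewrite ebc ca negbK.
have bS : b \in S.
  have [<- //|[c [ebc ca] sC]] := branch_split sB.
  by move/setP: (noS c ebc ca) => /(_ s); rewrite in_setI sS sC in_set0.
have [bl|nbl] := boolP (leaf e b); first by exists b.
have /set0Pn [c] : nbhd e b :\ a != set0.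
  apply: contra nbl => /eqP Nb0.
  by rewrite /leaf (cardsD1 a) Nb0 cards0 inE e_sym eab.
rewrite in_setD1 inE => /andP[ca ebc].
have cS : c \notin S.
  apply/negP => cS; move/setP: (noS c ebc ca) => /(_ c).
  by rewrite in_setI cS branch_root in_set0.
case/negP: (fS c cS); apply/cards1P; exists b; apply/setP => y.
rewrite in_setI in_set1 [y \in nbhd e c]inE; apply/andP/eqP => [[ecy yS]|->].
  apply: contraTeq yS => yb; have yC := branch_step ebc (branch_root b c) ecy yb.
  by move/setP: (noS c ebc ca) => /(_ y); rewrite in_setI yC in_set0 andbT => ->.
by rewrite e_sym ebc bS.
Qed.

Lemma fort_has_leaf S : 2 <= #|V| -> fort e S -> exists2 l, l \in S & leaf e l.
Proof.
move=> V2 fS; have [s sS] := set0Pn _ fS.1.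
have /card_gt0P [z] : 0 < #|predC1 s| by rewrite cardC1 -subn1 subn_gt0.
rewrite inE => zs; have /connectP [[|y p] /= pp zp] := conn s z.
  by rewrite zp eqxx in zs.
have eys : e y s by case/andP: pp; rewrite e_sym.
apply: (fort_branch_leaf fS eys); apply/set0Pn; exists s.
by rewrite in_setI sS branch_root.
Qed.

Lemma minimal_fort_nbhd_le1 S b :
  minimal_fort e S -> b \in S -> #|nbhd e b :&: S| <= 1.
Proof.
move=> mS bS; have [[_ fS] _] := mS; rewrite leqNgt; apply/negP => Nb2.
pose X := \bigcup_(c in nbhd e b :&: S) branch b c.
have NbX : nbhd e b :&: S \subset X.
  by apply/subsetP => c cN; apply/bigcupP; exists c => //; apply: branch_root.
have /negP : b \notin X.
  apply/negP => /bigcupP [c /setIP[ebc _]]; apply/negP.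
  by apply: branch_base; rewrite -inE.
apply; apply: (subsetP (minimal_fort_subset mS _)) bS; split.
  have /card_gt0P [c cN] := ltnW Nb2.
  by apply/set0Pn; exists c; rewrite in_setI (subsetP NbX) // andbT; case/setIP: cN.
move=> v; rewrite in_setI negb_and; have [->|vb] := eqVneq v b => [_|].
  by rewrite setIA (setIidPl NbX) neq_ltn Nb2 orbT.
have [/bigcupP [c /setIP[ebc cS] vC]|vX] := boolP (v \in X); rewrite ?orbF ?orbT => vS.
  rewrite inE in ebc; have vc : v != c by apply: contraNneq vS => ->.
  rewrite setIA (setIidPl _) ?fS //; apply: subset_trans (subsetIl _ _) _.
  apply: subset_trans (branch_nbhd ebc vC vc) (bigcup_sup _ _).
  by rewrite in_setI inE ebc.
rewrite (_ : _ :&: _ = set0) ?cards0 //; apply/setP => y; rewrite !in_setI in_set0.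
apply/and3P => -[ey _ /bigcupP [c cN yC]]; have /setIP[ebc _] := cN; rewrite inE in ebc.
have vC : v \notin branch b c by apply: contra vX => vC; apply/bigcupP; exists c.
by move/setP: (nbhd_outside_branch ebc vC vb) => /(_ y); rewrite in_setI ey yC in_set0.
Qed.

Lemma minimal_fort_branch S a b : minimal_fort e S -> e a b -> b \notin S ->
  #|(nbhd e b :&: S) :\ a| != 1 -> S :&: branch a b != set0 ->
  S \subset branch a b.
Proof.
move=> mS eab bS Nb1 SB; have [[_ fS] _] := mS.
apply: minimal_fort_subset mS _; split=> // v; rewrite in_setI negb_and.
have [vB|vB] := boolP (v \in branch a b); rewrite ?orbF ?orbT => vS.
  have [->|vb] := eqVneq v b.
    by rewrite [S :&: _]setIC setIA nbhd_root_branch // setIDAC.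
  have NvB := subset_trans (subsetIl _ (S)) (branch_nbhd eab vB vb).
  by rewrite setIA (setIidPl NvB) fS.
rewrite setICA; have [->|va] := eqVneq v a.
  rewrite nbhd_base_branch // (_ : S :&: _ = set0) ?cards0 //.
  apply/setP => y; rewrite in_setI in_set1 in_set0.
  by case: eqP => [->|]; rewrite ?andbF // (negbTE bS).
by rewrite nbhd_outside_branch // setI0 cards0.
Qed.

Definition edge_rule (S : {set V}) (a b : V) : Prop :=
  [/\ (a \notin S -> b \notin S -> nbhd e b :&: S = set0),
      (a \notin S -> b \in S -> #|nbhd e b :&: S| <= 1),
      (a \in S -> b \notin S -> #|(nbhd e b :&: S) :\ a| = 1) &
      (a \in S -> b \in S -> #|(nbhd e b :&: S) :\ a| = 0)].

Lemma minimal_fort_edge_rule S a b :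
  minimal_fort e S -> e a b -> ~~ (S \subset branch a b) -> edge_rule S a b.
Proof.
move=> mS eab SB; have [[_ fS] _] := mS.
have aN : a \in nbhd e b by rewrite inE e_sym.
have NbS0 : b \notin S -> #|(nbhd e b :&: S) :\ a| != 1 ->
    (nbhd e b :&: S) :\ a = set0.
  move=> bS Nb1; apply/eqP; apply: contraNT SB => /set0Pn [y].
  rewrite in_setD1 in_setI [y \in nbhd e b]inE => /and3P[ya eby yS].
  apply: minimal_fort_branch => //; apply/set0Pn; exists y.
  by rewrite in_setI yS (branch_step eab (branch_root a b) eby ya).
split=> [aS bS | _ bS | aS bS | aS bS].
- have NbSa : (nbhd e b :&: S) :\ a = nbhd e b :&: S.
    apply/setP => y; rewrite in_setD1 andb_idl // => /setIP[_].
    by apply: contraTneq => ->.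
  by rewrite -NbSa NbS0 // NbSa fS.
- exact: minimal_fort_nbhd_le1.
- apply/eqP; apply: contraNT (fS b bS) => Nb1.
  by rewrite (cardsD1 a) in_setI aN aS NbS0 // cards0.
- have := minimal_fort_nbhd_le1 mS bS.
  by rewrite (cardsD1 a) in_setI aN aS add1n ltnS leqn0 => /eqP.
Qed.

Section LeafRooted.
Variables (S : {set V}) (l : V).
Hypotheses (lS : l \in S) (l_leaf : leaf e l)
  (rules : forall a b, e a b -> dist e l a < dist e l b -> edge_rule S a b).

Lemma rules_nbhd_le1 y : y \in S -> #|nbhd e y :&: S| <= 1.
Proof.
move=> yS; have [->|yl] := eqVneq y l.
  by rewrite -(eqP l_leaf) subset_leq_card ?subsetIl.
have [a eay ay] := dist_parent yl; have [_ rule_ii _ rule_iv] := rules eay ay.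
have [aS|aS] := boolP (a \in S); last exact: rule_ii.
by rewrite (cardsD1 a) in_setI inE e_sym eay aS rule_iv.
Qed.

Lemma rules_fort : fort e S.
Proof.
split=> [|v vS]; first by apply/set0Pn; exists l.
have vl : v != l by apply: contraNneq vS => ->.
have [a eav av] := dist_parent vl; have [rule_i _ rule_iii _] := rules eav av.
have [aS|aS] := boolP (a \in S); last by rewrite rule_i ?cards0.
by rewrite (cardsD1 a) in_setI inE e_sym eav aS rule_iii.
Qed.

Lemma rules_subfort_mem F : fort e F -> F \subset S -> forall b, b \in S ->
  (b \in F) = (l \in F).
Proof.
move=> fF FS b; move def_n: (dist e l b) => n.
elim/ltn_ind: n b def_n => n IH b def_n bS; have [->//|bl] := eqVneq b l.
have [a eab ab] := dist_parent bl; rewrite def_n in ab.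
have [aS|aS] := boolP (a \in S).
  rewrite -(IH _ ab a erefl aS); apply/idP/idP.
    by apply: fort_subset_pendant fF FS (rules_nbhd_le1 aS) _; rewrite e_sym.
  exact: fort_subset_pendant fF FS (rules_nbhd_le1 bS) eab.
have al : a != l by apply: contraNneq aS => ->.
have [p epa pa] := dist_parent al; have [rule_i _ rule_iii _] := rules epa pa.
have [pS|pS] := boolP (p \in S); last first.
  by move/setP: (rule_i pS aS) => /(_ b); rewrite in_setI inE eab bS in_set0.
have NaS : nbhd e a :&: S = [set p; b].
  have pN : p \in nbhd e a :&: S by rewrite in_setI inE e_sym epa pS.
  have /eqP/cards1P [x Nx] := rule_iii pS aS.
  have bN : b \in (nbhd e a :&: S) :\ p.
    rewrite in_setD1 in_setI inE eab bS !andbT.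
    by apply: contraTneq (ltn_trans pa ab) => <-; rewrite -def_n ltnn.
  by rewrite -(setD1K pN) Nx; move: bN; rewrite Nx in_set1 => /eqP ->.
rewrite -(IH _ (ltn_trans pa ab) p erefl pS).
by apply/idP/idP; apply: fort_subset_link fF FS aS _; rewrite NaS // setUC.
Qed.

Lemma rules_minimal_fort : minimal_fort e S.
Proof.
split=> [|F SF fF]; first exact: rules_fort.
have FS : F \subset S := proper_sub SF.
have [x xF] := set0Pn _ fF.1.
have lF : l \in F by rewrite -(rules_subfort_mem fF FS (subsetP FS x xF)).
case/negP: (proper_subn SF); apply/subsetP => b bS.
by rewrite (rules_subfort_mem fF FS bS).
Qed.

End LeafRooted.

End Graph.

Theorem mainTheorem8 (V : finType) (e : rel V)
  (e_sym : symmetric e) (e_irr : irreflexive e)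
  (tree : is_tree e) (size3 : 3 <= #|V|) (S : {set V}) :
  minimal_fort e S <->
  ((exists2 l, l \in S & leaf e l) /\
   (forall l, l \in S -> leaf e l ->
    forall a b, e a b -> dist e l a < dist e l b ->
      [/\ (a \notin S -> b \notin S -> nbhd e b :&: S = set0),
          (a \notin S -> b \in S -> #|nbhd e b :&: S| <= 1),
          (a \in S -> b \notin S -> #|(nbhd e b :&: S) :\ a| = 1) &
          (a \in S -> b \in S -> #|(nbhd e b :&: S) :\ a| = 0)])).
Proof.
case: tree => conn acyc; split=> [mS | [[l lS l_leaf] rules]].
  split=> [|l lS _ a b eab lab]; first exact: fort_has_leaf (ltnW size3) mS.1.
  apply: minimal_fort_edge_rule => //.
  apply: contraL lab => /subsetP/(_ l lS)/(branch_dist e_irr conn acyc eab).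
  by move/ltnW; rewrite leqNgt.
exact: rules_minimal_fort e_sym conn S l lS l_leaf (rules l lS l_leaf).
Qed.
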